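(* Let $H:\mathbb R\times\mathbb R\times\Omega\to\mathbb R$ satisfy (H1)–(H6) described in the context, fix $\omega\in\Omega$ and $\mu>\tilde A(\omega)$. Let $u\in USC(\mathbb R\setminus\{0\})$ be a viscosity sub-solution and $v\in LSC(\mathbb R\setminus\{0\})$ a viscosity super-solution of the problem $$H(Dw,y,\omega)=\mu\ \ (y\in\mathbb R\setminus\{0\}),\qquad w(0)=0,$$ and assume $\liminf_{|y|\to\infty}|y|^{-1}v(y,\omega)>0$. Then $u(\cdot,\omega)\le v(\cdot,\omega)$ in $\mathbb R\setminus\{0\}$.
   Context: $H:\mathbb R\times\mathbb R\times\Omega\to\mathbb R$, $(p,y,\omega)\mapsto H(p,y,\omega)$. (H1) $H$ is Lipschitz in $p$ uniformly in $(y,\omega)$. (H2) There are $c_0,C_0,\gamma>0$ with $-c_0|p+\gamma|\le H(p,y,\omega)\le C_0|p+\gamma|$. (H3) $\lim_{|p|\to\infty}\inf_{(y,\omega)}H(p,y,\omega)=+\infty$. (H4) There is a modulus $w$ with $|H(p,y,\omega)-H(p,x,\omega)|\le w(|x-y|(1+|p|))$. (H5) $p\mapsto H(p,y,\omega)$ is convex. (H6) $H(p,y,\omega)\ge H(0,y,\omega)$. $\tilde A(\omega)=\inf\{\mu:\ \exists v$ globally Lipschitz with $H(Dv,y,\omega)\le\mu$ in $\mathbb R$ in the viscosity sense$\}$. Being a sub-solution (resp. super-solution) of the problem includes the boundary condition $u(0)\le 0$ (resp. $v(0)\ge0$). *)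

From Stdlib Require Import Reals.
From Coquelicot Require Import Coquelicot.
Open Scope R_scope.

Section Defs.
Context {Omega : Type}.
Implicit Types (H : R -> R -> Omega -> R).

Definition H1 H : Prop :=
  exists L : R, forall p q y w, Rabs (H p y w - H q y w) <= L * Rabs (p - q).

Definition H2 H : Prop :=
  exists c0 C0 gamma : R, 0 < c0 /\ 0 < C0 /\ 0 < gamma /\
    forall p y w, - c0 * Rabs (p + gamma) <= H p y w /\ H p y w <= C0 * Rabs (p + gamma).

Definition H3 H : Prop :=
  forall M : R, exists Rp : R, forall p, Rp < Rabs p -> forall y w, M <= H p y w.

Definition modulus (m : R -> R) : Prop :=
  (forall r, 0 <= r -> 0 <= m r) /\
  (forall r s, 0 <= r -> r <= s -> m r <= m s) /\
  (forall eps, 0 < eps -> exists d, 0 < d /\ forall r, 0 <= r < d -> m r < eps).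

Definition H4 H : Prop :=
  exists m : R -> R, modulus m /\
    forall p x y w, Rabs (H p y w - H p x w) <= m (Rabs (x - y) * (1 + Rabs p)).

Definition H5 H : Prop :=
  forall y w p q t, 0 <= t <= 1 ->
    H (t * p + (1 - t) * q) y w <= t * H p y w + (1 - t) * H q y w.

Definition H6 H : Prop := forall p y w, H 0 y w <= H p y w.

Definition C1 (phi : R -> R) : Prop :=
  forall x, ex_derive phi x /\ continuous (Derive phi) x.

Definition local_max (f : R -> R) (x : R) : Prop :=
  exists r, 0 < r /\ forall y, Rabs (y - x) < r -> f y <= f x.
Definition local_min (f : R -> R) (x : R) : Prop :=
  exists r, 0 < r /\ forall y, Rabs (y - x) < r -> f x <= f y.

Definition visc_sub_on (U : R -> Prop) H (w : Omega) (mu : R) (u : R -> R) : Prop :=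
  forall phi x, C1 phi -> U x -> local_max (fun y => u y - phi y) x ->
    H (Derive phi x) x w <= mu.
Definition visc_super_on (U : R -> Prop) H (w : Omega) (mu : R) (v : R -> R) : Prop :=
  forall phi x, C1 phi -> U x -> local_min (fun y => v y - phi y) x ->
    mu <= H (Derive phi x) x w.

Definition punctured (x : R) : Prop := x <> 0.

Definition subsolution H w mu (u : R -> R) : Prop :=
  visc_sub_on punctured H w mu u /\ u 0 <= 0.
Definition supersolution H w mu (v : R -> R) : Prop :=
  visc_super_on punctured H w mu v /\ 0 <= v 0.

Definition usc_at (u : R -> R) (x : R) : Prop :=
  forall eps, 0 < eps -> exists d, 0 < d /\ forall y, Rabs (y - x) < d -> u y < u x + eps.
Definition lsc_at (v : R -> R) (x : R) : Prop :=
  forall eps, 0 < eps -> exists d, 0 < d /\ forall y, Rabs (y - x) < d -> v x - eps < v y.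

Definition globally_lipschitz (f : R -> R) : Prop :=
  exists L, forall x y, Rabs (f x - f y) <= L * Rabs (x - y).

Definition Atilde_set H (w : Omega) (mu : R) : Prop :=
  exists f : R -> R, globally_lipschitz f /\ visc_sub_on (fun _ => True) H w mu f.

Definition Atilde H (w : Omega) : Rbar := Glb_Rbar (Atilde_set H w).

Definition liminf_growth_pos (v : R -> R) : Prop :=
  exists c, 0 < c /\ exists Ry, forall y, Ry < Rabs y -> c <= v y / Rabs y.

End Defs.

From Pilot Require Import Defs.
From Stdlib Require Import Reals Lra Lia Classical IndefiniteDescription.
From Coquelicot Require Import Coquelicot.
Open Scope R_scope.

(* By the reflection [y |-> -y] it suffices to compare [u] and [v] for [y > 0].  Since
   [mu > Atilde], some [mu1 < mu] admits a Lipschitz subsolution, which forces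
   [H (0, ., w) <= mu1].  At each [x] let [a] be the slope with [H (a, x) = mu]; by
   convexity in [p], [H] is uniformly above [mu] at slope [a + e/2] and below [mu] at slope
   [a - e/2] near [x].  So on a short step [h] the subsolution [u] rises by at most
   [(a + e/2) h], while the supersolution [v] rises by at least [(a - 3e/2) h]: compare it
   with a strict subsolution shaped like an [atan] ramp, whose slope decays at infinity
   below the linear growth rate of [v].  Hence [u - v - 2 e y] does not increase, and
   [u 0 <= 0 <= v 0] gives [u <= v + 2 e y] for every [e > 0]. *)

(** * Semicontinuous functions on compact intervals *)

Lemma usc_cluster (f : R -> R) (a b : R) (x : nat -> R) :
  (forall z, a <= z <= b -> usc_at f z) -> (forall n, a <= x n <= b) ->
  exists l, a <= l <= b /\
    forall eps N, 0 < eps -> exists n, (N <= n)%nat /\ f (x n) < f l + eps.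
Proof.
  intros Hf Hx.
  destruct (Bolzano_Weierstrass x _ (compact_P3 a b) Hx) as [l Hl].
  assert (Hnear : forall d N, 0 < d -> exists n, (N <= n)%nat /\ Rabs (x n - l) < d).
  { intros d N Hd.
    destruct (Hl (disc l (mkposreal d Hd)) N) as [n [HNn Hn]].
    - exists (mkposreal d Hd). now intros z Hz.
    - now exists n. }
  assert (Hlab : a <= l <= b).
  { split; apply Rnot_lt_le; intro Hout.
    - destruct (Hnear (a - l) O) as [n [_ Hn]]; [lra|].
      apply Rabs_def2 in Hn. specialize (Hx n). lra.
    - destruct (Hnear (l - b) O) as [n [_ Hn]]; [lra|].
      apply Rabs_def2 in Hn. specialize (Hx n). lra. }
  exists l. split; [exact Hlab|].
  intros eps N Heps.
  destruct (Hf l Hlab eps Heps) as [d [Hd Hfd]].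
  destruct (Hnear d N Hd) as [n [HNn Hn]].
  exists n. split; [exact HNn | apply Hfd, Hn].
Qed.

Lemma usc_bounded_above (f : R -> R) (a b : R) :
  (forall z, a <= z <= b -> usc_at f z) ->
  exists B, forall z, a <= z <= b -> f z <= B.
Proof.
  intros Hf. apply NNPP. intro Hunbounded.
  assert (Hbig : forall n : nat, exists z, a <= z <= b /\ INR n < f z).
  { intro n. apply NNPP. intro Hn. apply Hunbounded. exists (INR n).
    intros z Hz. apply Rnot_lt_le. intro Hlt. apply Hn. now exists z. }
  destruct (functional_choice _ Hbig) as [x Hx].
  destruct (usc_cluster f a b x Hf (fun n => proj1 (Hx n))) as [l [_ Hl]].
  destruct (INR_unbounded (f l + 1)) as [N HN].
  destruct (Hl 1 N Rlt_0_1) as [n [HNn Hn]].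
  apply le_INR in HNn. pose proof (proj2 (Hx n)). lra.
Qed.

Lemma usc_attains_max (f : R -> R) (a b : R) :
  a <= b -> (forall z, a <= z <= b -> usc_at f z) ->
  exists m, a <= m <= b /\ forall z, a <= z <= b -> f z <= f m.
Proof.
  intros Hab Hf.
  set (E := fun t => exists z, a <= z <= b /\ t = f z).
  destruct (completeness E) as [sup [Hub Hlub]].
  { destruct (usc_bounded_above f a b Hf) as [B HB].
    exists B. intros t [z [Hz ->]]. auto. }
  { exists (f a), a. split; [lra | reflexivity]. }
  assert (Happrox : forall n : nat, exists z, a <= z <= b /\ sup - / INR (S n) < f z).
  { intro n. apply NNPP. intro Hn.
    assert (0 < / INR (S n)) by (apply Rinv_0_lt_compat, lt_0_INR; lia).
    enough (sup <= sup - / INR (S n)) by lra.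
    apply Hlub. intros t [z [Hz ->]]. apply Rnot_lt_le. intro Hlt. apply Hn. now exists z. }
  destruct (functional_choice _ Happrox) as [x Hx].
  destruct (usc_cluster f a b x Hf (fun n => proj1 (Hx n))) as [l [Hl Hcl]].
  exists l. split; [exact Hl|].
  assert (Hsup : sup <= f l).
  { apply Rle_plus_epsilon. intros eps Heps.
    destruct (archimed_cor1 (eps / 2)) as [N [HN HN0]]; [lra|].
    destruct (Hcl (eps / 2) N ltac:(lra)) as [n [HNn Hn]].
    assert (/ INR (S n) <= / INR N).
    { apply Rinv_le_contravar; [apply lt_0_INR; exact HN0 | apply le_INR; lia]. }
    pose proof (proj2 (Hx n)). lra. }
  intros z Hz. enough (f z <= sup) by lra. apply Hub. now exists z.
Qed.

Lemma usc_interior_local_max (f : R -> R) (p q Z : R) :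
  (forall z, p <= z <= Z -> usc_at f z) -> p < q < Z -> f p < f q -> f Z < f q ->
  exists m, p < m < Z /\ local_max f m.
Proof.
  intros Hf Hq Hp HZ.
  destruct (usc_attains_max f p Z ltac:(lra) Hf) as [m [Hm Hmax]].
  pose proof (Hmax q ltac:(lra)).
  assert (m <> p) by (intros ->; lra).
  assert (m <> Z) by (intros ->; lra).
  exists m. split; [lra|].
  exists (Rmin (m - p) (Z - m)). split; [apply Rmin_pos; lra|].
  intros y Hy. apply Hmax.
  pose proof (Rmin_l (m - p) (Z - m)). pose proof (Rmin_r (m - p) (Z - m)).
  apply Rabs_def2 in Hy. lra.
Qed.

Lemma lsc_interior_local_min (f : R -> R) (p q Z : R) :
  (forall z, p <= z <= Z -> lsc_at f z) -> p < q < Z -> f q < f p -> f q < f Z ->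
  exists m, p < m < Z /\ local_min f m.
Proof.
  intros Hf Hq Hp HZ.
  destruct (usc_interior_local_max (fun z => - f z) p q Z) as [m [Hm [r [Hr Hmax]]]];
    [| exact Hq | lra | lra |].
  - intros z Hz eps Heps. destruct (Hf z Hz eps Heps) as [d [Hd Hfd]].
    exists d. split; [exact Hd|]. intros y Hy. specialize (Hfd y Hy). lra.
  - exists m. split; [exact Hm|]. exists r. split; [exact Hr|].
    intros y Hy. specialize (Hmax y Hy). lra.
Qed.

Lemma continuous_eps (g : R -> R) (x : R) : continuous g x ->
  forall eps, 0 < eps -> exists d, 0 < d /\ forall y, Rabs (y - x) < d -> Rabs (g y - g x) < eps.
Proof.
  intros Hg eps Heps.
  apply continuity_pt_filterlim in Hg.
  destruct (Hg eps Heps) as [d [Hd Hgd]].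
  exists d. split; [exact Hd|]. intros y Hy.
  destruct (Req_dec y x) as [->|Hyx].
  - now rewrite Rminus_eq_0, Rabs_R0.
  - apply (Hgd y). split; [split; [exact I | auto] | exact Hy].
Qed.

Lemma usc_at_minus_continuous (u g : R -> R) (x : R) :
  usc_at u x -> continuous g x -> usc_at (fun y => u y - g y) x.
Proof.
  intros Hu Hg eps Heps.
  destruct (Hu (eps / 2) ltac:(lra)) as [d1 [Hd1 Hu1]].
  destruct (continuous_eps g x Hg (eps / 2) ltac:(lra)) as [d2 [Hd2 Hg2]].
  exists (Rmin d1 d2). split; [apply Rmin_pos; assumption|].
  intros y Hy.
  specialize (Hu1 y (Rlt_le_trans _ _ _ Hy (Rmin_l _ _))).
  specialize (Hg2 y (Rlt_le_trans _ _ _ Hy (Rmin_r _ _))).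
  apply Rabs_def2 in Hg2. lra.
Qed.

Lemma lsc_at_minus_continuous (v g : R -> R) (x : R) :
  lsc_at v x -> continuous g x -> lsc_at (fun y => v y - g y) x.
Proof.
  intros Hv Hg eps Heps.
  destruct (Hv (eps / 2) ltac:(lra)) as [d1 [Hd1 Hv1]].
  destruct (continuous_eps g x Hg (eps / 2) ltac:(lra)) as [d2 [Hd2 Hg2]].
  exists (Rmin d1 d2). split; [apply Rmin_pos; assumption|].
  intros y Hy.
  specialize (Hv1 y (Rlt_le_trans _ _ _ Hy (Rmin_l _ _))).
  specialize (Hg2 y (Rlt_le_trans _ _ _ Hy (Rmin_r _ _))).
  apply Rabs_def2 in Hg2. lra.
Qed.

Lemma lipschitz_continuity (f : R -> R) (K : R) :
  0 < K -> (forall x y, Rabs (f x - f y) <= K * Rabs (x - y)) -> continuity f.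
Proof.
  intros HK Hf x eps Heps.
  exists (eps / K). split; [apply Rdiv_lt_0_compat; assumption|].
  intros y [_ Hy]. simpl in *. unfold R_dist in *.
  eapply Rle_lt_trans; [apply Hf|].
  apply (Rmult_lt_compat_l K) in Hy; [|exact HK].
  replace (K * (eps / K)) with eps in Hy by (field; lra). exact Hy.
Qed.

Lemma continuous_usc_at (f : R -> R) (x : R) : continuous f x -> usc_at f x.
Proof.
  intros Hf eps Heps.
  destruct (continuous_eps f x Hf eps Heps) as [d [Hd Hfd]].
  exists d. split; [exact Hd|]. intros y Hy.
  specialize (Hfd y Hy). apply Rabs_def2 in Hfd. lra.
Qed.
(** * Test functions and convexity *)

Lemma C1_of_is_derive (f f' : R -> R) :
  (forall x, is_derive f x (f' x)) -> (forall x, continuous f' x) ->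
  Defs.C1 f /\ forall x, Derive f x = f' x.
Proof.
  intros Hd Hc.
  assert (HD : forall x, Derive f x = f' x) by (intro x; apply is_derive_unique, Hd).
  split; [|exact HD].
  intro x. split.
  - exists (f' x). apply Hd.
  - apply (continuous_ext f'); [intro; now rewrite HD | apply Hc].
Qed.

Lemma C1_continuous (g : R -> R) (x : R) : Defs.C1 g -> continuous g x.
Proof. intro Hg. apply (@ex_derive_continuous R_AbsRing R_NormedModule), (Hg x). Qed.

Lemma C1_reflect (phi : R -> R) : Defs.C1 phi ->
  Defs.C1 (fun z => phi (- z)) /\ forall z, Derive (fun z => phi (- z)) z = - Derive phi (- z).
Proof.
  intro Hphi. apply C1_of_is_derive.
  - intro z.
    assert (Hd : is_derive phi (- z) (Derive phi (- z))) by apply Derive_correct, Hphi.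
    replace (- Derive phi (- z)) with (scal (-1) (Derive phi (- z)))
      by (unfold scal; simpl; unfold mult; simpl; ring).
    apply (is_derive_comp phi (fun z => - z)); [exact Hd | auto_derive; auto].
  - intro z.
    apply (@continuous_opp R_UniformSpace R_AbsRing R_NormedModule (fun z => Derive phi (- z))).
    apply (@continuous_comp R_UniformSpace R_UniformSpace R_UniformSpace (fun z => - z)).
    + apply (@continuous_opp R_UniformSpace R_AbsRing R_NormedModule (fun z => z)).
      apply continuous_id.
    + apply Hphi.
Qed.

Definition convex_fun (f : R -> R) : Prop :=
  forall p q t, 0 <= t <= 1 -> f (t * p + (1 - t) * q) <= t * f p + (1 - t) * f q.

Lemma convex_scale (f : R -> R) (p t : R) :
  convex_fun f -> 0 <= t <= 1 -> f (t * p) <= t * f p + (1 - t) * f 0.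
Proof.
  intros Hf Ht. specialize (Hf p 0 t Ht).
  now replace (t * p + (1 - t) * 0) with (t * p) in Hf by ring.
Qed.

Lemma convex_nondecreasing_of_min0 (f : R -> R) (s t : R) :
  convex_fun f -> (forall p, f 0 <= f p) -> 0 <= s <= t -> f s <= f t.
Proof.
  intros Hf Hmin Hst.
  destruct (Req_dec t 0) as [Ht|Ht].
  - replace s with t by lra. lra.
  - pose proof (convex_scale f t (s / t) Hf) as Hc.
    replace (s / t * t) with s in Hc by (field; exact Ht).
    assert (Hst1 : 0 <= s / t <= 1).
    { split; [apply Rdiv_le_0_compat; lra|].
      apply (Rmult_le_reg_r t); [lra|]. unfold Rdiv. rewrite Rmult_assoc, Rinv_l; lra. }
    specialize (Hc Hst1). specialize (Hmin t). nra.
Qed.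

Lemma convex_chord_above (f : R -> R) (m0 a b : R) :
  convex_fun f -> f 0 <= m0 -> 0 < a < b ->
  f a + (f a - m0) * (b - a) / a <= f b.
Proof.
  intros Hf Hf0 Hab.
  pose proof (convex_scale f b (a / b) Hf) as Hc.
  replace (a / b * b) with a in Hc by (field; lra).
  assert (Ht : 0 <= a / b <= 1).
  { split; [apply Rdiv_le_0_compat; lra|].
    apply (Rmult_le_reg_r b); [lra|]. unfold Rdiv. rewrite Rmult_assoc, Rinv_l; lra. }
  specialize (Hc Ht).
  assert (Hm : f a <= a / b * f b + (1 - a / b) * m0) by nra.
  apply (Rmult_le_compat_l (b / a)) in Hm; [|apply Rdiv_le_0_compat; lra].
  replace (b / a * (a / b * f b + (1 - a / b) * m0)) with (f b + (b / a - 1) * m0) in Hm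
    by (field; lra).
  replace (f a + (f a - m0) * (b - a) / a) with (b / a * f a - (b / a - 1) * m0)
    by (field; lra).
  lra.
Qed.

Lemma convex_chord_below (f : R -> R) (m0 a b : R) :
  convex_fun f -> f 0 <= m0 -> 0 <= b < a ->
  f b <= f a - (f a - m0) * (a - b) / a.
Proof.
  intros Hf Hf0 Hab.
  pose proof (convex_scale f a (b / a) Hf) as Hc.
  replace (b / a * a) with b in Hc by (field; lra).
  assert (Ht : 0 <= b / a <= 1).
  { split; [apply Rdiv_le_0_compat; lra|].
    apply (Rmult_le_reg_r a); [lra|]. unfold Rdiv. rewrite Rmult_assoc, Rinv_l; lra. }
  specialize (Hc Ht).
  replace (f a - (f a - m0) * (a - b) / a) with (b / a * f a + (1 - b / a) * m0)
    by (field; lra).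
  nra.
Qed.

(** * Viscosity inequalities *)

Lemma subsolution_tilt_nonincreasing {Omega : Type} (U : R -> Prop)
    (H : R -> R -> Omega -> R) (w : Omega) (mu : R) (u : R -> R) (s p q Z : R) :
  visc_sub_on U H w mu u -> (forall z, p <= z <= Z -> usc_at u z) -> p < q < Z ->
  (forall z, p < z < Z -> U z) -> (forall z t, p < z < Z -> s <= t -> mu < H t z w) ->
  u q - s * q <= u p - s * p.
Proof.
  intros Hsub Husc Hpq HU Hslope.
  apply Rnot_lt_le. intro Hgain.
  set (A := ((u q - s * q) - (u p - s * p)) / 2).
  set (gap := Rabs ((u Z - s * Z) - (u q - s * q))).
  set (B := (gap / A + 1) / (Z - q)).
  assert (HA : 0 < A) by (unfold A; lra).
  assert (HB : 0 < B).
  { unfold B. apply Rdiv_lt_0_compat; [|lra].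
    pose proof (Rdiv_le_0_compat gap A (Rabs_pos _) HA). lra. }
  (* The exponential term is positive at [p], equals [A] at [q] and exceeds [2 A + gap] at [Z]. *)
  set (phi := fun y => s * y + A * exp (B * (y - q))).
  destruct (C1_of_is_derive phi (fun y => s + A * B * exp (B * (y - q)))) as [Hphi HDphi].
  { intro y. unfold phi. auto_derive; [exact I | unfold Rminus; ring]. }
  { intro y. apply (@ex_derive_continuous R_AbsRing R_NormedModule). auto_derive. exact I. }
  assert (Hq : u q - phi q = u q - s * q - A).
  { unfold phi. rewrite Rminus_eq_0, Rmult_0_r, exp_0. ring. }
  assert (Hp : u p - phi p < u q - phi q).
  { rewrite Hq. unfold phi. pose proof (exp_pos (B * (p - q))).
    assert (0 < A * exp (B * (p - q))) by (apply Rmult_lt_0_compat; assumption).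
    unfold A in *. lra. }
  assert (HZ : u Z - phi Z < u q - phi q).
  { rewrite Hq. unfold phi.
    pose proof (exp_ineq1_le (B * (Z - q))) as Hexp.
    apply (Rmult_le_compat_l A) in Hexp; [|lra].
    replace (A * (1 + B * (Z - q))) with (2 * A + gap) in Hexp by (unfold B; field; lra).
    pose proof (Rle_abs ((u Z - s * Z) - (u q - s * q))) as Hgap. fold gap in Hgap. lra. }
  destruct (usc_interior_local_max (fun y => u y - phi y) p q Z) as [m [Hm Hmax]];
    [| exact Hpq | exact Hp | exact HZ |].
  { intros z Hz. apply usc_at_minus_continuous; [now apply Husc | now apply C1_continuous]. }
  pose proof (Hsub phi m Hphi (HU m Hm) Hmax) as Hvisc.
  rewrite HDphi in Hvisc.
  assert (0 <= A * B * exp (B * (m - q))).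
  { pose proof (exp_pos (B * (m - q))). apply Rlt_le, Rmult_lt_0_compat; [nra | lra]. }
  pose proof (Hslope m (s + A * B * exp (B * (m - q))) Hm ltac:(lra)). lra.
Qed.

Lemma supersolution_tilt_ge_left {Omega : Type} (U : R -> Prop)
    (H : R -> R -> Omega -> R) (w : Omega) (mu : R) (v g : R -> R) (p q Z : R) :
  visc_super_on U H w mu v -> (forall z, p <= z <= Z -> lsc_at v z) -> Defs.C1 g ->
  p < q < Z -> (forall z, p < z < Z -> U z /\ H (Derive g z) z w < mu) ->
  v p - g p <= v Z - g Z -> v p - g p <= v q - g q.
Proof.
  intros Hsuper Hlsc Hg Hpq Hstrict HZ.
  apply Rnot_lt_le. intro Hdip.
  destruct (lsc_interior_local_min (fun y => v y - g y) p q Z) as [m [Hm Hmin]];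
    [| exact Hpq | exact Hdip | lra |].
  { intros z Hz. apply lsc_at_minus_continuous; [now apply Hlsc | now apply C1_continuous]. }
  destruct (Hstrict m Hm) as [HUm Hm_lt].
  pose proof (Hsuper g m Hg HUm Hmin). lra.
Qed.

Lemma H0_le_of_Atilde_set {Omega : Type} (H : R -> R -> Omega -> R) (w : Omega) (mu1 : R) :
  H4 H -> H6 H -> Atilde_set H w mu1 -> forall x, H 0 x w <= mu1.
Proof.
  intros [m [[_ [_ Hm]] HH4]] HH6 [f [[Lf Hlip] Hsub]] x.
  apply Rle_plus_epsilon. intros eta Heta.
  destruct (Hm eta Heta) as [d [Hd Hmd]].
  set (K := Rabs Lf + 1).
  assert (HK : 0 < K) by (unfold K; pose proof (Rabs_pos Lf); lra).
  assert (HfK : forall a b, Rabs (f a - f b) <= K * Rabs (a - b)).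
  { intros a b. eapply Rle_trans; [apply Hlip|].
    apply Rmult_le_compat_r; [apply Rabs_pos|]. unfold K. pose proof (Rle_abs Lf). lra. }
  set (r := d / 2).
  assert (Hr : 0 < r) by (unfold r; lra).
  (* The quadratic penalty reaches [2 K r] at distance [r], which the [K]-Lipschitz [f]
     cannot compensate: [f - phi] has an interior maximum within [r] of [x]. *)
  set (phi := fun y => (y - x) ^ 2 * (2 * K / r)).
  destruct (C1_of_is_derive phi (fun y => 2 * (y - x) * (2 * K / r))) as [Hphi _].
  { intro y. unfold phi. auto_derive; [exact I | ring]. }
  { intro y. apply (@ex_derive_continuous R_AbsRing R_NormedModule). auto_derive. exact I. }
  assert (Hedge : forall y, Rabs (y - x) = r -> f y - phi y < f x - phi x).
  { intros y Hy. unfold phi.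
    rewrite <- pow2_abs, Hy. replace ((x - x) ^ 2) with 0 by ring.
    replace (r ^ 2 * (2 * K / r)) with (2 * (K * r)) by (field; lra).
    pose proof (HfK y x) as Hfy. rewrite Hy in Hfy.
    pose proof (Rle_abs (f y - f x)). pose proof (Rmult_lt_0_compat K r HK Hr). lra. }
  destruct (usc_interior_local_max (fun y => f y - phi y) (x - r) x (x + r)) as [z [Hz Hmax]].
  - intros y _. apply usc_at_minus_continuous; [|now apply C1_continuous].
    apply continuous_usc_at, continuity_pt_filterlim.
    now apply (lipschitz_continuity f K).
  - lra.
  - apply Hedge. replace (x - r - x) with (- r) by ring. rewrite Rabs_Ropp. apply Rabs_right. lra.
  - apply Hedge. replace (x + r - x) with r by ring. apply Rabs_right. lra.
  - pose proof (Hsub phi z Hphi I Hmax) as Hvisc.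
    pose proof (HH6 (Derive phi z) z w).
    pose proof (HH4 0 x z w) as Hmod.
    rewrite Rabs_R0, Rplus_0_r, Rmult_1_r in Hmod.
    assert (Hxz : Rabs (x - z) < d) by (apply Rabs_def1; unfold r in *; lra).
    pose proof (Hmd (Rabs (x - z)) (conj (Rabs_pos _) Hxz)).
    apply Rabs_le_between in Hmod. lra.
Qed.

Section Reflection.
Context {Omega : Type}.
Implicit Types (H : R -> R -> Omega -> R) (f : R -> R).

Definition reflect_H H : R -> R -> Omega -> R := fun p y w => H (- p) (- y) w.

Lemma H1_reflect H : H1 H -> H1 (reflect_H H).
Proof.
  intros [L HL]. exists L. intros p q y w. unfold reflect_H.
  replace (p - q) with (- (- p - - q)) by ring. rewrite Rabs_Ropp. apply HL.
Qed.

Lemma H3_reflect H : H3 H -> H3 (reflect_H H).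
Proof.
  intros HH M. destruct (HH M) as [Rp HRp]. exists Rp.
  intros p Hp y w. apply HRp. now rewrite Rabs_Ropp.
Qed.

Lemma H4_reflect H : H4 H -> H4 (reflect_H H).
Proof.
  intros [m [Hm HH]]. exists m. split; [exact Hm|].
  intros p x y w. unfold reflect_H.
  specialize (HH (- p) (- x) (- y) w).
  replace (- x - - y) with (- (x - y)) in HH by ring.
  now rewrite !Rabs_Ropp in HH.
Qed.

Lemma H5_reflect H : H5 H -> H5 (reflect_H H).
Proof.
  intros HH y w p q t Ht. unfold reflect_H.
  replace (- (t * p + (1 - t) * q)) with (t * - p + (1 - t) * - q) by ring.
  now apply HH.
Qed.

Lemma H6_reflect H : H6 H -> H6 (reflect_H H).
Proof. intros HH p y w. unfold reflect_H. rewrite Ropp_0. apply HH. Qed.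

Lemma usc_at_reflect f x : usc_at f (- x) -> usc_at (fun z => f (- z)) x.
Proof.
  intros Hf eps Heps. destruct (Hf eps Heps) as [d [Hd Hfd]].
  exists d. split; [exact Hd|]. intros y Hy. apply Hfd.
  replace (- y - - x) with (- (y - x)) by ring. now rewrite Rabs_Ropp.
Qed.

Lemma lsc_at_reflect f x : lsc_at f (- x) -> lsc_at (fun z => f (- z)) x.
Proof.
  intros Hf eps Heps. destruct (Hf eps Heps) as [d [Hd Hfd]].
  exists d. split; [exact Hd|]. intros y Hy. apply Hfd.
  replace (- y - - x) with (- (y - x)) by ring. now rewrite Rabs_Ropp.
Qed.

Lemma local_max_reflect (u phi : R -> R) x :
  local_max (fun y => u (- y) - phi y) x -> local_max (fun y => u y - phi (- y)) (- x).
Proof.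
  intros [r [Hr Hf]]. exists r. split; [exact Hr|]. intros y Hy.
  specialize (Hf (- y)). rewrite !Ropp_involutive in *. apply Hf.
  replace (- y - x) with (- (y - - x)) by ring. now rewrite Rabs_Ropp.
Qed.

Lemma local_min_reflect (v phi : R -> R) x :
  local_min (fun y => v (- y) - phi y) x -> local_min (fun y => v y - phi (- y)) (- x).
Proof.
  intros [r [Hr Hf]]. exists r. split; [exact Hr|]. intros y Hy.
  specialize (Hf (- y)). rewrite !Ropp_involutive in *. apply Hf.
  replace (- y - x) with (- (y - - x)) by ring. now rewrite Rabs_Ropp.
Qed.

Lemma subsolution_reflect H w mu u :
  subsolution H w mu u -> subsolution (reflect_H H) w mu (fun z => u (- z)).
Proof.
  intros [Hsub Hu0]. split; [|now rewrite Ropp_0].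
  intros phi x Hphi Hx Hmax.
  destruct (C1_reflect phi Hphi) as [Hpsi HDpsi].
  unfold reflect_H. rewrite <- (Ropp_involutive x) at 1. rewrite <- HDpsi.
  apply Hsub; [exact Hpsi | unfold punctured in *; lra | now apply local_max_reflect].
Qed.

Lemma supersolution_reflect H w mu v :
  supersolution H w mu v -> supersolution (reflect_H H) w mu (fun z => v (- z)).
Proof.
  intros [Hsuper Hv0]. split; [|now rewrite Ropp_0].
  intros phi x Hphi Hx Hmin.
  destruct (C1_reflect phi Hphi) as [Hpsi HDpsi].
  unfold reflect_H. rewrite <- (Ropp_involutive x) at 1. rewrite <- HDpsi.
  apply Hsuper; [exact Hpsi | unfold punctured in *; lra | now apply local_min_reflect].
Qed.

Lemma liminf_growth_pos_reflect v :
  liminf_growth_pos v -> liminf_growth_pos (fun z => v (- z)).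
Proof.
  intros [c [Hc [Ry HRy]]]. exists c. split; [exact Hc|]. exists Ry.
  intros y Hy. rewrite <- Rabs_Ropp. apply HRy. now rewrite Rabs_Ropp.
Qed.

End Reflection.

(** * The atan ramp *)

Definition ramp_weight (x wd z : R) : R := / (1 + ((z - x) / wd) ^ 2).

Definition atan_ramp (e0 s x wd y : R) : R := e0 * y + (s - e0) * wd * atan ((y - x) / wd).

Lemma ramp_weight_bounds x wd z : 0 < ramp_weight x wd z <= 1.
Proof.
  unfold ramp_weight. pose proof (pow2_ge_0 ((z - x) / wd)).
  split; [apply Rinv_0_lt_compat; lra|].
  rewrite <- Rinv_1. apply Rinv_le_contravar; lra.
Qed.

Lemma ramp_weight_far x wd r z :
  0 < wd -> 0 < r -> r <= Rabs (z - x) -> ramp_weight x wd z <= (wd / r) ^ 2.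
Proof.
  intros Hwd Hr Hz. unfold ramp_weight.
  assert (Hratio : (r / wd) ^ 2 <= ((z - x) / wd) ^ 2).
  { rewrite <- (pow2_abs ((z - x) / wd)). unfold Rdiv. rewrite Rabs_mult, Rabs_inv, (Rabs_right wd) by lra.
    apply pow_incr. split; [apply Rmult_le_pos; [lra | apply Rlt_le, Rinv_0_lt_compat; lra]|].
    apply Rmult_le_compat_r; [apply Rlt_le, Rinv_0_lt_compat|]; lra. }
  replace ((wd / r) ^ 2) with (/ (r / wd) ^ 2) by (field; lra).
  apply Rinv_le_contravar; [apply pow_lt, Rdiv_lt_0_compat|]; lra.
Qed.

Lemma ramp_weight_near x wd z : 1 - ramp_weight x wd z <= ((z - x) / wd) ^ 2.
Proof.
  unfold ramp_weight. set (t := ((z - x) / wd) ^ 2).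
  assert (0 <= t) by apply pow2_ge_0.
  assert (/ (1 + t) * (1 + t) = 1) by (field; lra).
  assert (0 < / (1 + t)) by (apply Rinv_0_lt_compat; lra).
  nra.
Qed.

Lemma atan_ramp_C1 e0 s x wd : 0 < wd ->
  Defs.C1 (atan_ramp e0 s x wd) /\
  forall z, Derive (atan_ramp e0 s x wd) z = ramp_weight x wd z * s + (1 - ramp_weight x wd z) * e0.
Proof.
  intro Hwd. apply C1_of_is_derive.
  - intro z. unfold atan_ramp, ramp_weight.
    assert (Hatan : is_derive (fun y => atan ((y - x) / wd)) z
                      (/ wd * / (1 + ((z - x) / wd) ^ 2))).
    { apply (is_derive_comp atan (fun y => (y - x) / wd)).
      - apply is_derive_Reals, derivable_pt_lim_atan.
      - auto_derive; [exact I | field; lra]. }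
    pose proof (pow2_ge_0 ((z - x) / wd)).
    replace (/ (1 + ((z - x) / wd) ^ 2) * s + (1 - / (1 + ((z - x) / wd) ^ 2)) * e0)
      with (e0 * 1 + (s - e0) * wd * (/ wd * / (1 + ((z - x) / wd) ^ 2))) by (field; split; [lra | pose proof (pow2_ge_0 (z - x)); pose proof (pow_lt wd 2 Hwd); lra]).
    apply (is_derive_plus (fun y => e0 * y)); [auto_derive; [exact I | ring]|].
    now apply is_derive_scal.
  - intro z. apply (@ex_derive_continuous R_AbsRing R_NormedModule).
    unfold ramp_weight. auto_derive. pose proof (pow2_ge_0 ((z - x) / wd)).
    unfold Rdiv in *. simpl in *. lra.
Qed.

Lemma atan_ramp_le e0 s x wd y : e0 <= s -> 0 < wd ->
  atan_ramp e0 s x wd y <= e0 * y + (s - e0) * wd * (PI / 2).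
Proof.
  intros Hs Hwd. unfold atan_ramp.
  pose proof (atan_bound ((y - x) / wd)).
  assert (0 <= (s - e0) * wd) by (apply Rmult_le_pos; lra).
  nra.
Qed.

Lemma atan_ramp_increment e0 s x wd h e :
  0 <= e0 <= s -> 0 < wd -> 0 < h -> s * (h / wd) ^ 2 <= e ->
  (s - e) * h <= atan_ramp e0 s x wd (x + h) - atan_ramp e0 s x wd x.
Proof.
  intros Hs Hwd Hh He.
  destruct (atan_ramp_C1 e0 s x wd Hwd) as [Hg HDg].
  destruct (MVT_cor2 (atan_ramp e0 s x wd) (Derive (atan_ramp e0 s x wd)) x (x + h))
    as [xi [Hmvt Hxi]]; [lra | |].
  { intros z _. apply is_derive_Reals, Derive_correct, Hg. }
  rewrite Hmvt. replace (x + h - x) with h by ring.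
  apply Rmult_le_compat_r; [lra|].
  rewrite HDg.
  pose proof (ramp_weight_bounds x wd xi). pose proof (ramp_weight_near x wd xi).
  assert (((xi - x) / wd) ^ 2 <= (h / wd) ^ 2).
  { apply pow_incr. split; [apply Rdiv_le_0_compat; lra|].
    apply Rmult_le_compat_r; [apply Rlt_le, Rinv_0_lt_compat|]; lra. }
  nra.
Qed.

Lemma small_relative_step (B e wd : R) : 0 <= B -> 0 < e -> 0 < wd ->
  exists h0, 0 < h0 /\ forall s h, 0 <= s <= B -> 0 < h <= h0 -> s * (h / wd) ^ 2 <= e.
Proof.
  intros HB He Hwd.
  set (t0 := Rmin 1 (e / (B + 1))).
  assert (Ht0 : 0 < t0 <= 1 /\ t0 <= e / (B + 1)).
  { split; [split; [apply Rmin_pos; [lra | apply Rdiv_lt_0_compat; lra] | apply Rmin_l]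
           | apply Rmin_r]. }
  exists (wd * t0). split; [apply Rmult_lt_0_compat; lra|].
  intros s h Hs Hh.
  assert (Hhw : 0 < h / wd <= t0).
  { split; [apply Rdiv_lt_0_compat; lra|].
    apply (Rmult_le_reg_r wd); [exact Hwd|].
    unfold Rdiv. rewrite Rmult_assoc, Rinv_l by lra. lra. }
  assert (Hsq : (h / wd) ^ 2 <= e / (B + 1)) by nra.
  apply (Rmult_le_compat_l (B + 1)) in Hsq; [|lra].
  replace ((B + 1) * (e / (B + 1))) with e in Hsq by (field; lra).
  assert (0 <= (h / wd) ^ 2) by apply pow2_ge_0. nra.
Qed.

Lemma exists_far_point (a b A k : R) : 0 < k -> exists Z, a < Z /\ b < Z /\ A < k * Z.
Proof.
  intro Hk. exists (Rabs a + Rabs b + Rabs A / k + 1).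
  assert (0 <= Rabs A / k) by (apply Rdiv_le_0_compat; [apply Rabs_pos | lra]).
  pose proof (Rle_abs a). pose proof (Rle_abs b). pose proof (Rle_abs A).
  pose proof (Rabs_pos a). pose proof (Rabs_pos b).
  assert (Rabs A = k * (Rabs A / k)) by (field; lra).
  assert (0 < k * (Rabs a + Rabs b + 1)) by (apply Rmult_lt_0_compat; lra).
  repeat split; nra.
Qed.

Lemma le_at_0_of_small_steps (phi : R -> R) (h0 : R) :
  0 < h0 -> (forall x h, 0 <= x -> 0 < h <= h0 -> phi (x + h) <= phi x) ->
  forall y, 0 < y -> phi y <= phi 0.
Proof.
  intros Hh0 Hstep y Hy.
  destruct (INR_unbounded (y / h0)) as [N HN].
  assert (HN0 : 0 < INR N) by (pose proof (Rdiv_lt_0_compat y h0 Hy Hh0); lra).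
  set (h := y / INR N).
  assert (Hh : 0 < h <= h0).
  { unfold h. split; [apply Rdiv_lt_0_compat; lra|].
    apply (Rmult_le_reg_r (INR N)); [exact HN0|].
    unfold Rdiv. rewrite Rmult_assoc, Rinv_l by lra.
    apply (Rmult_lt_compat_r h0) in HN; [|exact Hh0].
    unfold Rdiv in HN. rewrite Rmult_assoc, Rinv_l in HN by lra. lra. }
  assert (Hind : forall j, phi (INR j * h) <= phi 0).
  { induction j as [|j IH]; [simpl; now rewrite Rmult_0_l|].
    rewrite S_INR. replace ((INR j + 1) * h) with (INR j * h + h) by ring.
    eapply Rle_trans; [apply Hstep; [|exact Hh] | exact IH].
    apply Rmult_le_pos; [apply pos_INR | lra]. }
  specialize (Hind N). replace (INR N * h) with y in Hind by (unfold h; field; lra).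
  exact Hind.
Qed.

Lemma Rle_of_le_small_multiples (a b k delta : R) :
  0 < delta -> 0 <= k -> (forall e, 0 < e <= delta -> a <= b + k * e) -> a <= b.
Proof.
  intros Hdelta Hk Hsmall. apply Rle_plus_epsilon. intros eps Heps.
  set (e := Rmin delta (eps / (k + 1))).
  assert (He : 0 < e <= delta) by (split; [apply Rmin_pos; [|apply Rdiv_lt_0_compat] | apply Rmin_l]; lra).
  assert (k * e <= eps).
  { assert (Hke : k * e <= k * (eps / (k + 1))) by (apply Rmult_le_compat_l; [lra | apply Rmin_r]).
    assert (k * (eps / (k + 1)) <= eps).
    { apply (Rmult_le_reg_r (k + 1)); [lra|].
      replace (k * (eps / (k + 1)) * (k + 1)) with (k * eps) by (field; lra). nra. }
    lra. }
  specialize (Hsmall e He). lra.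
Qed.

Lemma H4_equicontinuous {Omega : Type} (H : R -> R -> Omega -> R) (w : Omega) (B : R) :
  H4 H -> 0 <= B -> forall kap, 0 < kap ->
  exists r, 0 < r /\ forall p x z, Rabs p <= B -> Rabs (z - x) < r ->
    Rabs (H p z w - H p x w) < kap.
Proof.
  intros [m [[_ [_ Hm]] HH4]] HB kap Hkap.
  destruct (Hm kap Hkap) as [d [Hd Hmd]].
  exists (d / (B + 1)). split; [apply Rdiv_lt_0_compat; lra|].
  intros p x z Hp Hz.
  eapply Rle_lt_trans; [apply HH4|]. apply Hmd.
  rewrite Rabs_minus_sym in Hz.
  pose proof (Rabs_pos (x - z)).
  split; [apply Rmult_le_pos; [lra | pose proof (Rabs_pos p); lra]|].
  apply (Rmult_lt_compat_r (B + 1)) in Hz; [|lra].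
  replace (d / (B + 1) * (B + 1)) with d in Hz by (field; lra).
  assert (Rabs (x - z) * (1 + Rabs p) <= Rabs (x - z) * (B + 1)) by (apply Rmult_le_compat_l; lra).
  lra.
Qed.

Lemma liminf_growth_pos_lower_bound (v : R -> R) :
  liminf_growth_pos v -> exists c R0, 0 < c /\ forall y, R0 < y -> c * y <= v y.
Proof.
  intros [c [Hc [Ry HRy]]]. exists c, (Rabs Ry). split; [exact Hc|].
  intros y Hy.
  assert (Hy0 : 0 < y) by (pose proof (Rabs_pos Ry); lra).
  assert (Hq : c <= v y / y).
  { rewrite <- (Rabs_right y) at 2 by lra. apply HRy.
    rewrite Rabs_right by lra. pose proof (Rle_abs Ry). lra. }
  apply (Rmult_le_compat_r y) in Hq; [|lra].
  now replace (v y / y * y) with (v y) in Hq by (field; lra).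
Qed.

Lemma Atilde_lt_witness {Omega : Type} (H : R -> R -> Omega -> R) (w : Omega) (mu : R) :
  Rbar_lt (Atilde H w) (Finite mu) -> exists mu1, mu1 < mu /\ Atilde_set H w mu1.
Proof.
  intro Hlt. apply NNPP. intro Hnone.
  assert (Hlb : is_lb_Rbar (Atilde_set H w) (Finite mu)).
  { intros x Hx. simpl. apply Rnot_lt_le. intro Hx_lt. apply Hnone. now exists x. }
  apply (Rbar_lt_not_le _ _ Hlt), (proj2 (Glb_Rbar_correct (Atilde_set H w))), Hlb.
Qed.

Section HalfLineComparison.
Context {Omega : Type} (H : R -> R -> Omega -> R) (w : Omega) (L M mu1 mu : R).
Hypothesis HL : 0 < L.
Hypothesis H_lipschitz : forall p q y, Rabs (H p y w - H q y w) <= L * Rabs (p - q).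
Hypothesis H_convex : H5 H.
Hypothesis H_min0 : H6 H.
Hypothesis HM : 0 < M.
Hypothesis H_above_M : forall y, mu < H M y w.
Hypothesis Hmu1 : mu1 < mu.
Hypothesis H_0_le : forall y, H 0 y w <= mu1.
Hypothesis H_equicontinuous : forall kap, 0 < kap -> exists r, 0 < r /\
  forall p x z, Rabs p <= M + 1 -> Rabs (z - x) < r -> Rabs (H p z w - H p x w) < kap.

Lemma H_convex_fun y : convex_fun (fun p => H p y w).
Proof. intros p q t Ht. now apply H_convex. Qed.

Lemma H_nondecreasing p t y : 0 <= p <= t -> H p y w <= H t y w.
Proof.
  intro Hpt. apply (convex_nondecreasing_of_min0 (fun p => H p y w)); [apply H_convex_fun | | exact Hpt].
  intro. apply H_min0.
Qed.

Lemma H_le_mu1_plus p y : 0 <= p -> H p y w <= mu1 + L * p.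
Proof.
  intro Hp. pose proof (H_lipschitz p 0 y) as Hlip.
  rewrite Rminus_0_r, (Rabs_right p) in Hlip by lra.
  apply Rabs_le_between in Hlip. pose proof (H_0_le y). lra.
Qed.

Lemma critical_slope x : exists a, (mu - mu1) / L <= a <= M /\ H a x w = mu.
Proof.
  destruct (IVT (fun p => H p x w - mu) 0 M) as [a [Ha Hmu]].
  - apply (lipschitz_continuity _ L HL). intros p q.
    replace (H p x w - mu - (H q x w - mu)) with (H p x w - H q x w) by ring. apply H_lipschitz.
  - exact HM.
  - pose proof (H_0_le x). lra.
  - pose proof (H_above_M x). lra.
  - exists a. split; [|lra]. split; [|lra].
    pose proof (H_le_mu1_plus a x (proj1 Ha)).
    apply (Rmult_le_reg_l L); [exact HL|].
    replace (L * ((mu - mu1) / L)) with (mu - mu1) by (field; lra). lra.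
Qed.

(* The margin [kap] around [mu] comes from convexity in [p]: the chord from [(0, mu1)]
   to [(a, mu)] has slope at least [(mu - mu1) / M]. *)
Lemma tilted_slopes_strict e : 0 < e <= (mu - mu1) / L -> e <= 1 ->
  exists r, 0 < r /\ forall x a z, (mu - mu1) / L <= a <= M -> H a x w = mu ->
    Rabs (z - x) < r -> mu < H (a + e / 2) z w /\ H (a - e / 2) z w < mu.
Proof.
  intros He He1.
  set (kap := (mu - mu1) * (e / 2) / M).
  assert (Hkap : 0 < kap) by (unfold kap; apply Rdiv_lt_0_compat; [apply Rmult_lt_0_compat|]; lra).
  destruct (H_equicontinuous kap Hkap) as [r [Hr Hcont]].
  exists r. split; [exact Hr|].
  intros x a z Ha Hax Hz.
  assert (Hq0 : 0 < (mu - mu1) / L) by (apply Rdiv_lt_0_compat; lra).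
  assert (Hmargin : kap <= (mu - mu1) * (e / 2) / a).
  { unfold kap, Rdiv. apply Rmult_le_compat_l; [nra|]. apply Rinv_le_contravar; lra. }
  pose proof (convex_chord_above (fun p => H p x w) mu1 a (a + e / 2) (H_convex_fun x)
                (H_0_le x) ltac:(lra)) as Habove.
  pose proof (convex_chord_below (fun p => H p x w) mu1 a (a - e / 2) (H_convex_fun x)
                (H_0_le x) ltac:(lra)) as Hbelow.
  simpl in Habove, Hbelow. rewrite Hax in Habove, Hbelow.
  replace (a + e / 2 - a) with (e / 2) in Habove by ring.
  replace (a - (a - e / 2)) with (e / 2) in Hbelow by ring.
  pose proof (Hcont (a + e / 2) x z ltac:(rewrite Rabs_right; lra) Hz) as Hup.
  pose proof (Hcont (a - e / 2) x z ltac:(rewrite Rabs_right; lra) Hz) as Hdown.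
  apply Rabs_def2 in Hup, Hdown. lra.
Qed.

(* Near [x] the ramp has slope close to [sg], where [H] is below [mu]; far from [x] its
   slope is close to [e0], where [H] is below [mu1 + (mu - mu1) / 4]. *)
Lemma atan_ramp_strict_subsolution x sg r wd e0 :
  0 < r -> 0 < wd -> 0 <= e0 <= sg -> sg <= M + 1 ->
  L * e0 <= (mu - mu1) / 4 -> (wd / r) ^ 2 * (L * (M + 1)) <= (mu - mu1) / 4 ->
  (forall z, Rabs (z - x) < r -> H sg z w < mu) ->
  forall z, H (Derive (atan_ramp e0 sg x wd) z) z w < mu.
Proof.
  intros Hr Hwd He0 Hsg HLe0 Hwdr Hnear z.
  destruct (atan_ramp_C1 e0 sg x wd Hwd) as [_ HDg]. rewrite HDg.
  pose proof (ramp_weight_bounds x wd z) as Hrho.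
  set (rho := ramp_weight x wd z) in *.
  pose proof (H_convex z w sg e0 rho ltac:(lra)) as Hmix.
  pose proof (H_le_mu1_plus e0 z ltac:(lra)) as He0_le.
  destruct (Rlt_or_le (Rabs (z - x)) r) as [Hzx|Hzx].
  - specialize (Hnear z Hzx).
    assert (rho * H sg z w < rho * mu) by (apply Rmult_lt_compat_l; lra).
    assert ((1 - rho) * H e0 z w <= (1 - rho) * mu) by (apply Rmult_le_compat_l; lra).
    lra.
  - pose proof (ramp_weight_far x wd r z Hwd Hr Hzx) as Hfar. fold rho in Hfar.
    assert (Hsg_le : H sg z w <= mu1 + L * (M + 1)).
    { pose proof (H_le_mu1_plus sg z ltac:(lra)).
      assert (L * sg <= L * (M + 1)) by (apply Rmult_le_compat_l; lra). lra. }
    assert (rho * (L * (M + 1)) <= (mu - mu1) / 4).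
    { assert (0 <= L * (M + 1)) by (apply Rmult_le_pos; lra).
      assert (rho * (L * (M + 1)) <= (wd / r) ^ 2 * (L * (M + 1)))
        by (apply Rmult_le_compat_r; lra).
      lra. }
    assert (rho * H sg z w <= rho * (mu1 + L * (M + 1))) by (apply Rmult_le_compat_l; lra).
    assert ((1 - rho) * H e0 z w <= (1 - rho) * (mu1 + (mu - mu1) / 4))
      by (apply Rmult_le_compat_l; lra).
    nra.
Qed.

Lemma ramp_width r : 0 < r ->
  exists wd, 0 < wd /\ (wd / r) ^ 2 * (L * (M + 1)) <= (mu - mu1) / 4.
Proof.
  intro Hr.
  assert (HLM : 0 < L * (M + 1)) by (apply Rmult_lt_0_compat; lra).
  set (lam := Rmin 1 ((mu - mu1) / (4 * (L * (M + 1))))).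
  assert (Hlam : 0 < lam <= 1).
  { split; [apply Rmin_pos; [lra | apply Rdiv_lt_0_compat; lra] | apply Rmin_l]. }
  assert (Hlam_LM : lam * (L * (M + 1)) <= (mu - mu1) / 4).
  { pose proof (Rmin_r 1 ((mu - mu1) / (4 * (L * (M + 1))))) as Hlam_r. fold lam in Hlam_r.
    apply (Rmult_le_compat_r (L * (M + 1))) in Hlam_r; [|lra].
    replace ((mu - mu1) / (4 * (L * (M + 1))) * (L * (M + 1))) with ((mu - mu1) / 4)
      in Hlam_r by (field; lra).
    exact Hlam_r. }
  exists (r * lam). split; [apply Rmult_lt_0_compat; lra|].
  replace (r * lam / r) with lam by (field; lra). nra.
Qed.

Variables (v : R -> R) (c R0 : R).
Hypothesis v_lsc : forall x, lsc_at v x.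
Hypothesis v_super : visc_super_on punctured H w mu v.
Hypothesis Hc : 0 < c.
Hypothesis v_growth : forall y, R0 < y -> c * y <= v y.

Lemma ramp_floor_slope : exists e0, 0 < e0 < c /\ e0 <= (mu - mu1) / L / 4.
Proof.
  assert (Hq0 : 0 < (mu - mu1) / L) by (apply Rdiv_lt_0_compat; lra).
  exists (Rmin c ((mu - mu1) / L) / 4).
  pose proof (Rmin_l c ((mu - mu1) / L)). pose proof (Rmin_r c ((mu - mu1) / L)).
  pose proof (Rmin_pos c ((mu - mu1) / L) Hc Hq0). lra.
Qed.

(* Compare [v] with an [atan] ramp, a strict subsolution whose slope drops from [sg]
   near [x] to [e0 < c] at infinity, so that the growth of [v] rules out a minimum of
   [v - ramp] far to the right. *)
Lemma supersolution_increment e r : 0 < e -> 0 < r ->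
  exists h0, 0 < h0 /\ forall x sg h, 0 <= x -> (mu - mu1) / L / 2 <= sg <= M + 1 ->
    (forall z, Rabs (z - x) < r -> H sg z w < mu) -> 0 < h <= h0 ->
    (sg - e) * h <= v (x + h) - v x.
Proof.
  intros He Hr.
  destruct ramp_floor_slope as [e0 [He0 He0_le]].
  assert (HLe0 : L * e0 <= (mu - mu1) / 4).
  { apply (Rmult_le_compat_l L) in He0_le; [|lra].
    replace (L * ((mu - mu1) / L / 4)) with ((mu - mu1) / 4) in He0_le by (field; lra).
    exact He0_le. }
  destruct (ramp_width r Hr) as [wd [Hwd Hwdr]].
  destruct (small_relative_step (M + 1) e wd ltac:(lra) He Hwd) as [h0 [Hh0 Hsmall]].
  exists h0. split; [exact Hh0|].
  intros x sg h Hx Hsg Hnear Hh.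
  set (g := atan_ramp e0 sg x wd).
  destruct (atan_ramp_C1 e0 sg x wd Hwd) as [Hg _].
  pose proof (atan_ramp_strict_subsolution x sg r wd e0 Hr Hwd ltac:(lra) ltac:(lra)
                HLe0 Hwdr Hnear) as Hstrict.
  destruct (exists_far_point (x + h) R0 (v x - g x + (sg - e0) * wd * (PI / 2)) (c - e0))
    as [Z [HZh [HZR HZc]]]; [lra|].
  assert (Hfar : v x - g x <= v Z - g Z).
  { pose proof (v_growth Z HZR).
    assert (g Z <= e0 * Z + (sg - e0) * wd * (PI / 2)) by (apply atan_ramp_le; lra).
    assert ((c - e0) * Z = c * Z - e0 * Z) by ring.
    lra. }
  assert (Hmono : v x - g x <= v (x + h) - g (x + h)).
  { apply (supersolution_tilt_ge_left punctured H w mu v g x (x + h) Z v_super);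
      [intros; apply v_lsc | exact Hg | lra | | exact Hfar].
    intros z Hz. split; [unfold punctured; lra | apply Hstrict]. }
  pose proof (atan_ramp_increment e0 sg x wd h e ltac:(lra) Hwd ltac:(lra)
                (Hsmall sg h ltac:(lra) Hh)).
  unfold g in *. lra.
Qed.

Variable u : R -> R.
Hypothesis u_usc : forall x, usc_at u x.
Hypothesis u_sub : visc_sub_on punctured H w mu u.

Lemma tilted_difference_step e : 0 < e <= Rmin 1 ((mu - mu1) / L) ->
  exists h0, 0 < h0 /\ forall x h, 0 <= x -> 0 < h <= h0 ->
    u (x + h) - v (x + h) - 2 * e * (x + h) <= u x - v x - 2 * e * x.
Proof.
  intros He.
  pose proof (Rmin_l 1 ((mu - mu1) / L)). pose proof (Rmin_r 1 ((mu - mu1) / L)).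
  destruct (tilted_slopes_strict e ltac:(lra) ltac:(lra)) as [r [Hr Htilt]].
  destruct (supersolution_increment e r ltac:(lra) Hr) as [h1 [Hh1 Hincr]].
  exists (Rmin (r / 2) h1). split; [apply Rmin_pos; lra|].
  intros x h Hx Hh.
  pose proof (Rmin_l (r / 2) h1). pose proof (Rmin_r (r / 2) h1).
  destruct (critical_slope x) as [a [Ha Hax]].
  assert (Hu : u (x + h) - (a + e / 2) * (x + h) <= u x - (a + e / 2) * x).
  { apply (subsolution_tilt_nonincreasing punctured H w mu u _ x (x + h) (x + 2 * h) u_sub);
      [intros; apply u_usc | lra | intros z Hz; unfold punctured; lra |].
    intros z t Hz Ht.
    destruct (Htilt x a z Ha Hax) as [Hup _]; [apply Rabs_lt_between'; lra|].
    pose proof (H_nondecreasing (a + e / 2) t z ltac:(lra)). lra. }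
  assert (Hv : (a - e / 2 - e) * h <= v (x + h) - v x).
  { apply Hincr; [exact Hx | | | lra].
    - assert (0 < (mu - mu1) / L) by (apply Rdiv_lt_0_compat; lra). lra.
    - intros z Hz. now apply (Htilt x a z Ha Hax). }
  lra.
Qed.

Lemma comparison_on_positive_halfline :
  u 0 <= 0 -> 0 <= v 0 -> forall y, 0 < y -> u y <= v y.
Proof.
  intros Hu0 Hv0 y Hy.
  apply (Rle_of_le_small_multiples (u y) (v y) (2 * y) (Rmin 1 ((mu - mu1) / L)));
    [apply Rmin_pos; [lra | apply Rdiv_lt_0_compat; lra] | lra |].
  intros e He.
  destruct (tilted_difference_step e He) as [h0 [Hh0 Hstep]].
  pose proof (le_at_0_of_small_steps (fun x => u x - v x - 2 * e * x) h0 Hh0 Hstep y Hy).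
  simpl in *. lra.
Qed.

End HalfLineComparison.

Lemma comparison_on_positive_reals {Omega : Type} (H : R -> R -> Omega -> R) (w : Omega)
    (mu1 mu : R) (u v : R -> R) :
  H1 H -> H3 H -> H4 H -> H5 H -> H6 H -> mu1 < mu -> (forall y, H 0 y w <= mu1) ->
  (forall x, usc_at u x) -> (forall x, lsc_at v x) ->
  subsolution H w mu u -> supersolution H w mu v -> liminf_growth_pos v ->
  forall y, 0 < y -> u y <= v y.
Proof.
  intros [L0 HL0] HH3 HH4 HH5 HH6 Hmu1 H_0_le Husc Hlsc [Hsub Hu0] [Hsuper Hv0] Hgrowth.
  set (L := Rabs L0 + 1).
  assert (HL : 0 < L) by (unfold L; pose proof (Rabs_pos L0); lra).
  assert (Hlip : forall p q y, Rabs (H p y w - H q y w) <= L * Rabs (p - q)).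
  { intros p q y. eapply Rle_trans; [apply HL0|].
    apply Rmult_le_compat_r; [apply Rabs_pos|]. unfold L. pose proof (Rle_abs L0). lra. }
  destruct (HH3 (mu + 1)) as [Rp HRp].
  set (M := Rabs Rp + 1).
  assert (HM : 0 < M) by (unfold M; pose proof (Rabs_pos Rp); lra).
  assert (H_above_M : forall y, mu < H M y w).
  { intro y. enough (mu + 1 <= H M y w) by lra. apply HRp.
    unfold M. rewrite Rabs_right by (pose proof (Rabs_pos Rp); lra).
    pose proof (Rle_abs Rp). lra. }
  destruct (liminf_growth_pos_lower_bound v Hgrowth) as [c [R0 [Hc Hv_growth]]].
  exact (comparison_on_positive_halfline H w L M mu1 mu HL Hlip HH5 HH6 HM H_above_M Hmu1
           H_0_le (H4_equicontinuous H w (M + 1) HH4 ltac:(lra)) v c R0 Hlsc Hsuper Hc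
           Hv_growth u Husc Hsub Hu0 Hv0).
Qed.

Lemma comparison_on_negative_reals {Omega : Type} (H : R -> R -> Omega -> R) (w : Omega)
    (mu1 mu : R) (u v : R -> R) :
  H1 H -> H3 H -> H4 H -> H5 H -> H6 H -> mu1 < mu -> (forall y, H 0 y w <= mu1) ->
  (forall x, usc_at u x) -> (forall x, lsc_at v x) ->
  subsolution H w mu u -> supersolution H w mu v -> liminf_growth_pos v ->
  forall y, y < 0 -> u y <= v y.
Proof.
  intros HH1 HH3 HH4 HH5 HH6 Hmu1 H_0_le Husc Hlsc Hsub Hsuper Hgrowth y Hy.
  rewrite <- (Ropp_involutive y).
  apply (comparison_on_positive_reals (reflect_H H) w mu1 mu
           (fun z => u (- z)) (fun z => v (- z))); [| | | | | exact Hmu1 | | | | | | | lra].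
  - now apply H1_reflect.
  - now apply H3_reflect.
  - now apply H4_reflect.
  - now apply H5_reflect.
  - now apply H6_reflect.
  - intro z. unfold reflect_H. rewrite Ropp_0. apply H_0_le.
  - intro z. now apply usc_at_reflect.
  - intro z. now apply lsc_at_reflect.
  - now apply subsolution_reflect.
  - now apply supersolution_reflect.
  - now apply liminf_growth_pos_reflect.
Qed.

Theorem proposition4p3 (Omega : Type) (H : R -> R -> Omega -> R)
  (hH1 : H1 H) (hH2 : H2 H) (hH3 : H3 H) (hH4 : H4 H) (hH5 : H5 H) (hH6 : H6 H)
  (w : Omega) (mu : R) (hmu : Rbar_lt (Atilde H w) (Finite mu))
  (u v : R -> R)
  (hu_usc : forall x, usc_at u x) (hv_lsc : forall x, lsc_at v x)
  (hu : subsolution H w mu u) (hv : supersolution H w mu v)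
  (hgrowth : liminf_growth_pos v) :
  forall y, y <> 0 -> u y <= v y.
Proof.
  intros y Hy.
  destruct (Atilde_lt_witness H w mu hmu) as [mu1 [Hmu1 Hmu1_set]].
  pose proof (H0_le_of_Atilde_set H w mu1 hH4 hH6 Hmu1_set) as H_0_le.
  destruct (Rlt_or_le 0 y) as [Hpos|Hneg].
  - exact (comparison_on_positive_reals H w mu1 mu u v hH1 hH3 hH4 hH5 hH6 Hmu1 H_0_le
             hu_usc hv_lsc hu hv hgrowth y Hpos).
  - exact (comparison_on_negative_reals H w mu1 mu u v hH1 hH3 hH4 hH5 hH6 Hmu1 H_0_le
             hu_usc hv_lsc hu hv hgrowth y ltac:(lra)).
Qed.
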